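(* Let $U$ be a two-qubit unitary written as $$U=(u_A\otimes u_B)\exp\!\Big(i\sum_{k=1}^3 t_k\,\sigma_k\otimes\sigma_k\Big)(v_A^\dagger\otimes v_B^\dagger),$$ with $u_A,u_B,v_A,v_B$ single-qubit unitaries, $t_1,t_2,t_3\in\mathbb R$, and $\sigma_1,\sigma_2,\sigma_3$ the Pauli matrices. Then $U$ is a generalized thermal unitary if and only if there exist $j\neq k$ in $\{1,2,3\}$ with $(t_j-t_k)\bmod(\pi/2)=0$ or $(t_j+t_k)\bmod(\pi/2)=0$.
   Context: A unitary $U$ on $\mathcal H_A\otimes\mathcal H_B$ is a generalized thermal unitary if there exist Hermitian operators $H_A,H_A'$ on $\mathcal H_A$ and $H_B,H_B'$ on $\mathcal H_B$, with at least one of $H_A,H_B$ not proportional to the identity, such that $U(H_A\otimes\mathbb 1+\mathbb 1\otimes H_B)U^\dagger=H_A'\otimes\mathbb 1+\mathbb 1\otimes H_B'$. Here $\mathcal H_A=\mathcal H_B=\mathbb C^2$. *)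

From HB Require Import structures.
From mathcomp Require Import all_boot all_order all_algebra.
From mathcomp Require Import complex mxtens.
From mathcomp Require Import boolp classical_sets filter reals topology normedtype sequences trigo.
Set Implicit Arguments. Unset Strict Implicit. Unset Printing Implicit Defensive.
Import Order.TTheory GRing.Theory Num.Theory numFieldNormedType.Exports.
Local Open Scope ring_scope.
Local Open Scope complex_scope.

Section QDefs.
Variable R : realType.
Local Notation C := R[i].

Definition adj {m n : nat} (A : 'M[C]_(m, n)) : 'M[C]_(n, m) :=
  (map_mx (@conjc R) A)^T.

Definition unitary {n : nat} (U : 'M[C]_n) : Prop :=
  U *m adj U = 1%:M /\ adj U *m U = 1%:M.

Definition hermitian {n : nat} (H : 'M[C]_n) : Prop := adj H = H.

Definition mxpow {n : nat} (A : 'M[C]_n) (k : nat) : 'M[C]_n :=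
  iter k (mulmx A) 1%:M.

(* matrix exponential: exp A = sum_k A^k / k!, entrywise, as a limit of
   partial sums of real and imaginary parts (the series always converges) *)
Definition expm {n : nat} (A : 'M[C]_n) : 'M[C]_n :=
  \matrix_(i, j)
    Complex (limn (series (fun k => complex.Re (mxpow A k i j) / (k`!)%:R)))
            (limn (series (fun k => complex.Im (mxpow A k i j) / (k`!)%:R))).

Definition iC : C := Complex 0 1.

(* Pauli matrices sigma_1, sigma_2, sigma_3 (indices 0,1,2) *)
Definition pauli (k : 'I_3) : 'M[C]_2 :=
  \matrix_(a < 2, b < 2)
    match val k with
    | 0 => if a == b then 0 else 1
    | 1 => if a == b then 0 else if val a == 0 then - iC else iC
    | _ => if a == b then (if val a == 0 then 1 else -1) else 0
    end.

Definition canonical_unitary (uA uB vA vB : 'M[C]_2) (t : 'I_3 -> R)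
  : 'M[C]_(2 * 2) :=
  (uA *t uB) *m
  expm (iC *: \sum_(k < 3) ((t k)%:C *: (pauli k *t pauli k))) *m
  (adj vA *t adj vB).

Definition prop_to_id {n : nat} (H : 'M[C]_n) : Prop :=
  exists c : C, H = c%:M.

Definition gen_thermal (U : 'M[C]_(2 * 2)) : Prop :=
  exists HA HA' HB HB' : 'M[C]_2,
    [/\ hermitian HA /\ hermitian HA', hermitian HB /\ hermitian HB',
        (~ prop_to_id HA \/ ~ prop_to_id HB) &
        U *m (HA *t 1%:M + 1%:M *t HB) *m adj U
          = HA' *t 1%:M + 1%:M *t HB'].

Definition zero_mod_half_pi (x : R) : Prop :=
  exists m : int, x = m%:~R * (pi / 2).

End QDefs.

(* Up to the local unitaries u_A ⊗ u_B and v_A^† ⊗ v_B^†, which preserve generalized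
   thermality, U is exp(i H) with H = sum_k t_k σ_k ⊗ σ_k.  H is diagonal in the Bell
   basis, so U is too, with eigenvalues e^(i φ±), e^(i ψ±).  Conjugating a local
   Hamiltonian A ⊗ 1 + 1 ⊗ B by a Bell-diagonal unitary multiplies its components along
   σ_k ⊗ 1 ± 1 ⊗ σ_k, each of which couples two Bell states with eigenvalues x, y, by
   x/y - y/x, and the result is again local exactly when all six products vanish.  These
   components all vanish only when A and B are scalar, so U is generalized thermal iff two
   eigenphases differ by a multiple of π; the six differences are the 2 (t_j ± t_k). *)

From Pilot Require Import Defs.
From HB Require Import structures.
From mathcomp Require Import all_boot all_order all_algebra.
From mathcomp Require Import complex mxtens.
From mathcomp Require Import boolp classical_sets filter reals topology normedtype sequences trigo.
From mathcomp Require Import ring lra.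
Set Implicit Arguments. Unset Strict Implicit. Unset Printing Implicit Defensive.
Import Order.TTheory GRing.Theory Num.Theory numFieldNormedType.Exports.
Local Open Scope classical_set_scope.
Local Open Scope complex_scope.
Local Open Scope ring_scope.

Ltac case_ord4 i := case: i => [[|[|[|[|?]]]] ?] //.

Lemma two_neq0 {F : numFieldType} : 2 != 0 :> F.
Proof. by rewrite pnatr_eq0. Qed.

Lemma half_eq0 (F : numFieldType) (x : F) : x / 2 = 0 -> x = 0.
Proof. by move/eqP; rewrite mulf_eq0 invr_eq0 (negbTE two_neq0) orbF => /eqP. Qed.

Lemma sum_diff_eq0 (F : numFieldType) (x y : F) : x + y = 0 -> x - y = 0 -> x = 0 /\ y = 0.
Proof.
move=> sum0 diff0.
have xE : x = ((x + y) + (x - y)) / 2 by field.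
have yE : y = ((x + y) - (x - y)) / 2 by field.
by split; [rewrite xE | rewrite yE]; rewrite sum0 diff0 ?addr0 ?subr0 mul0r.
Qed.

Lemma ord2P (i : 'I_2) : i = ord0 \/ i = ord_max.
Proof. by case: i => [[|[|?]] ?] //; [left | right]; apply: val_inj. Qed.

Lemma sum_ord2 (V : nmodType) (F : 'I_2 -> V) : \sum_(i < 2) F i = F ord0 + F ord_max.
Proof. by rewrite big_ord_recl big_ord1; congr (_ + F _); apply: val_inj. Qed.

Definition o0 : 'I_3 := @Ordinal 3 0 isT.
Definition o1 : 'I_3 := @Ordinal 3 1 isT.
Definition o2 : 'I_3 := @Ordinal 3 2 isT.

Lemma ord3P (k : 'I_3) : [\/ k = o0, k = o1 | k = o2].
Proof.
by case: k => [[|[|[|?]]] ?] //; [constructor 1 | constructor 2 | constructor 3]; apply: val_inj.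
Qed.

Lemma forall_ord3 (P : 'I_3 -> Prop) : (forall k, P k) <-> [/\ P o0, P o1 & P o2].
Proof. by split=> [P_ | [P0 P1 P2] k]; [split | case: (ord3P k) => ->]. Qed.

Lemma exists_ord3 (P : 'I_3 -> Prop) : (exists k, P k) <-> P o0 \/ P o1 \/ P o2.
Proof.
split=> [[k] | [? | [? | ?]]]; last 3 first; [by exists o0 | by exists o1 | by exists o2 |].
by case: (ord3P k) => -> Pk; [left | right; left | right; right].
Qed.

Lemma sum_ord3 (V : nmodType) (F : 'I_3 -> V) : \sum_(k < 3) F k = F o0 + F o1 + F o2.
Proof.
rewrite !big_ord_recl big_ord0 addr0 addrA.
by congr (F _ + F _ + F _); apply: val_inj.
Qed.

(* The basis |00>, |01>, |10>, |11> of C^2 ⊗ C^2. *)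
Definition i0 : 'I_(2 * 2) := @Ordinal (2 * 2) 0 isT.
Definition i1 : 'I_(2 * 2) := @Ordinal (2 * 2) 1 isT.
Definition i2 : 'I_(2 * 2) := @Ordinal (2 * 2) 2 isT.
Definition i3 : 'I_(2 * 2) := @Ordinal (2 * 2) 3 isT.

Lemma tens_indexE :
  [/\ mxtens_index (ord0, ord0) = i0, mxtens_index (ord0, ord_max) = i1,
      mxtens_index (ord_max, ord0) = i2 & mxtens_index (ord_max, ord_max) = i3].
Proof. by split; apply: val_inj. Qed.

Lemma sum_ord4 (V : nmodType) (F : 'I_(2 * 2) -> V) :
  \sum_(i < 2 * 2) F i = F i0 + F i1 + F i2 + F i3.
Proof.
rewrite !big_ord_recl big_ord0 addr0 !addrA.
by congr (F _ + F _ + F _ + F _); apply: val_inj.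
Qed.

Section TwoQubits.
Variable R : realType.
Local Notation C := R[i].
Local Notation hermitian := Defs.hermitian.

Definition expi (x : R) : C := Complex (cos x) (sin x).

Lemma expiD x y : expi (x + y) = expi x * expi y.
Proof. by apply/eqP; rewrite eq_complex /= cosD sinD; apply/andP; split; apply/eqP; ring. Qed.

Lemma expi_conj x : (expi x)^* = expi (- x).
Proof. by rewrite /expi cosN sinN. Qed.

Lemma expi_unit x : expi x * (expi x)^* = 1.
Proof. by rewrite expi_conj -expiD subrr /expi cos0 sin0. Qed.

Lemma unimodular_neq0 (z : C) : z * z^* = 1 -> z != 0.
Proof. by apply: contra_eq_neq => ->; rewrite mul0r eq_sym oner_eq0. Qed.

Lemma unimodular_inv (z : C) : z * z^* = 1 -> z^-1 = z^*.
Proof. by move=> zz; rewrite -[LHS]mulr1 -zz mulKf // unimodular_neq0. Qed.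

Definition ratio_gap (x y : C) := x / y - y / x.

Lemma ratio_gap_expi a b : ratio_gap (expi a) (expi b) = Complex 0 (2 * sin (a - b)).
Proof.
rewrite /ratio_gap !unimodular_inv ?expi_unit // !expi_conj -!expiD.
rewrite -(opprB a b) /expi cosN sinN.
by apply/eqP; rewrite eq_complex /=; apply/andP; split; apply/eqP; ring.
Qed.

Lemma ratio_gap_expi_eq0 a b : ratio_gap (expi a) (expi b) = 0 <-> sin (a - b) = 0.
Proof.
rewrite ratio_gap_expi; split => [/eqP|->]; last by rewrite mulr0.
by rewrite eq_complex /= eqxx mulf_eq0 pnatr_eq0 => /eqP.
Qed.

Lemma sin_addpi_eq0 (y : R) (n : nat) : (sin (y + n%:R * pi) == 0) = (sin y == 0).
Proof. by rewrite mulr_natl alternatingn ?mulf_eq0 ?signr_eq0 //; exact: sinDpi. Qed.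

Lemma sin_addintpi_eq0 (y : R) (m : int) : (sin (y + m%:~R * pi) == 0) = (sin y == 0).
Proof.
case: m => n; first exact: sin_addpi_eq0.
by rewrite -(sin_addpi_eq0 (y + _) n.+1) NegzE mulrNz mulNr subrK.
Qed.

Lemma sin_eq0 (x : R) : sin x = 0 <-> exists m : int, x = m%:~R * pi.
Proof.
split=> [sx0|[m ->]]; last by apply/eqP; rewrite -[_ * pi]add0r sin_addintpi_eq0 sin0.
pose m := Num.floor (x / pi); exists m.
have pi_gt0 := pi_gt0 R.
have lb : m%:~R * pi <= x by rewrite -ler_pdivlMr // floor_le.
have ub : x < m%:~R * pi + pi.
  by rewrite -[X in _ + X]mul1r -mulrDl -ltr_pdivrMr // -[1]/(1%:~R) -intrD floorD1_gt.
have [lt_mx|//|->//] := ltgtP (m%:~R * pi) x; last by lra.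
have := @sin_gt0_pi _ (x - m%:~R * pi); rewrite subr_gt0 lt_mx ltrBlDr addrC ub => /(_ isT).
by move: sx0 => /eqP; rewrite -(sin_addintpi_eq0 _ (- m)) mulrNz mulNr => /eqP ->; rewrite ltxx.
Qed.

Lemma zero_mod_half_piE (u : R) : zero_mod_half_pi u <-> sin (2 * u) = 0.
Proof.
rewrite sin_eq0; split => -[m hm]; exists m; first by rewrite hm; field.
by rewrite -[u](mulKf (_ : 2 != 0)) ?pnatr_eq0 // hm; field.
Qed.

Lemma zero_mod_half_piN (u : R) : zero_mod_half_pi (- u) <-> zero_mod_half_pi u.
Proof.
by split=> -[m um]; exists (- m); rewrite mulrNz mulNr -um ?opprK.
Qed.

Lemma ratio_gap_expi_half_pi (a b u : R) :
  a - b = 2 * u -> ratio_gap (expi a) (expi b) = 0 <-> zero_mod_half_pi u.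
Proof. by move=> abu; rewrite ratio_gap_expi_eq0 zero_mod_half_piE abu. Qed.

Lemma iC_sqr : iC R ^+ 2 = -1.
Proof. exact: sqr_i. Qed.

Lemma iC_mul_iC : iC R * iC R = -1.
Proof. by rewrite -expr2 iC_sqr. Qed.

Lemma conj_iC : (iC R)^* = - iC R.
Proof. exact: conjCi. Qed.

Lemma conj_NiC : (- iC R)^* = iC R.
Proof. by rewrite -conj_iC conjCK. Qed.

Lemma iC_neq0 : iC R != 0.
Proof. exact: neq0Ci. Qed.

Lemma iC_exprE k : iC R ^+ k = (if odd k then iC R else 1) * ((-1) ^+ k./2)%:C.
Proof.
rewrite -{1}(odd_double_half k) exprD -mul2n exprM iC_sqr rmorphXn rmorphN1.
by case: (odd k); rewrite ?expr1 ?expr0.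
Qed.

Lemma Re_expi_coeff (x : R) k : complex.Re ((iC R * x%:C) ^+ k) / k`!%:R = cos_coeff x k.
Proof.
rewrite exprMn iC_exprE -rmorphXn -mulrA -rmorphM /cos_coeff /=.
by case: (odd k) => /=; rewrite -exprnP; ring.
Qed.

Lemma Im_expi_coeff (x : R) k : complex.Im ((iC R * x%:C) ^+ k) / k`!%:R = sin_coeff x k.
Proof.
rewrite exprMn iC_exprE -rmorphXn -mulrA -rmorphM /sin_coeff /=.
case: (boolP (odd k)) => /= [k_odd|_]; last by ring.
rewrite -[in k.-1](odd_double_half k) k_odd /= doubleK; ring.
Qed.

Lemma cvg_series_cos (x : R) : series (cos_coeff x) @ \oo --> cos x.
Proof. by have := @is_cvg_series_cos_coeff R x; rewrite unlock. Qed.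

Lemma cvg_series_sin (x : R) : series (sin_coeff x) @ \oo --> sin x.
Proof. by have := @is_cvg_series_sin_coeff R x; rewrite unlock. Qed.

Lemma limn_series_lin (c1 c2 : R) (f g : nat -> R) (lf lg : R) :
  series f @ \oo --> lf -> series g @ \oo --> lg ->
  limn (series (fun k => c1 * f k + c2 * g k)) = c1 * lf + c2 * lg.
Proof.
move=> cvf cvg; apply: cvg_lim; first exact: Rhausdorff.
have -> : series (fun k => c1 * f k + c2 * g k) = (fun n => c1 * series f n + c2 * series g n).
  by apply/funext => n; rewrite /series /= big_split /= -!mulr_sumr.
by apply: cvgD; apply: cvgMl_tmp.
Qed.

Lemma Re_realM (c : R) (w : C) : complex.Re (c%:C * w) = c * complex.Re w.
Proof. by case: w => a b /=; ring. Qed.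

Lemma Im_realM (c : R) (w : C) : complex.Im (c%:C * w) = c * complex.Im w.
Proof. by case: w => a b /=; ring. Qed.

Lemma expm_entry n (M : 'M[C]_n) i j (c1 c2 a b : R) :
  (forall k, mxpow M k i j = c1%:C * (iC R * a%:C) ^+ k + c2%:C * (iC R * b%:C) ^+ k) ->
  expm M i j = c1%:C * expi a + c2%:C * expi b.
Proof.
move=> Mk; rewrite mxE.
have -> : (fun k => complex.Re (mxpow M k i j) / k`!%:R) =
          (fun k => c1 * cos_coeff a k + c2 * cos_coeff b k).
  by apply/funext => k; rewrite Mk -!Re_expi_coeff raddfD /= !Re_realM; ring.
have -> : (fun k => complex.Im (mxpow M k i j) / k`!%:R) =
          (fun k => c1 * sin_coeff a k + c2 * sin_coeff b k).
  by apply/funext => k; rewrite Mk -!Im_expi_coeff raddfD /= !Im_realM; ring.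
rewrite (limn_series_lin _ _ (@cvg_series_cos a) (@cvg_series_cos b)).
rewrite (limn_series_lin _ _ (@cvg_series_sin a) (@cvg_series_sin b)).
by apply/eqP; rewrite eq_complex /=; apply/andP; split; apply/eqP; ring.
Qed.

Lemma adjE m n (A : 'M[C]_(m, n)) i j : adj A i j = (A j i)^*.
Proof. by rewrite !mxE. Qed.

Lemma adj_mul m n p (A : 'M[C]_(m, n)) (B : 'M[C]_(n, p)) : adj (A *m B) = adj B *m adj A.
Proof. by rewrite /adj map_mxM trmx_mul. Qed.

Lemma adjK m n (A : 'M[C]_(m, n)) : adj (adj A) = A.
Proof. by apply/matrixP => i j; rewrite !mxE conjcK. Qed.

Lemma adj_add m n (A B : 'M[C]_(m, n)) : adj (A + B) = adj A + adj B.
Proof. by apply/matrixP => i j; rewrite !mxE rmorphD. Qed.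

Lemma adj_scale m n (c : C) (A : 'M[C]_(m, n)) : adj (c *: A) = c^* *: adj A.
Proof. by apply/matrixP => i j; rewrite !mxE rmorphM. Qed.

Lemma adj_scalar n (c : C) : adj (c%:M : 'M[C]_n) = c^*%:M.
Proof. by rewrite /adj map_scalar_mx tr_scalar_mx. Qed.

Lemma adj_tens m n p q (A : 'M[C]_(m, n)) (B : 'M[C]_(p, q)) :
  adj (A *t B) = adj A *t adj B.
Proof. by apply/matrixP => i j; rewrite !mxE rmorphM. Qed.

Lemma unitary_adj n (P : 'M[C]_n) : unitary P -> unitary (adj P).
Proof. by case=> PP' P'P; split; rewrite adjK. Qed.

Lemma unitary_conjK n (P H : 'M[C]_n) : unitary P -> adj P *m (P *m H *m adj P) *m P = H.
Proof. by case=> _ P'P; rewrite !mulmxA P'P mul1mx -mulmxA P'P mulmx1. Qed.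

Lemma hermitian_entry n (X : 'M[C]_n) i j : hermitian X -> (X j i)^* = X i j.
Proof. by move=> hX; rewrite -adjE hX. Qed.

Lemma hermitian_conj n (P H : 'M[C]_n) : hermitian H -> hermitian (P *m H *m adj P).
Proof. by rewrite /hermitian => hH; rewrite !adj_mul adjK hH mulmxA. Qed.

Lemma hermitianZ n (e : C) (H : 'M[C]_n) : e^* = e -> hermitian H -> hermitian (e *: H).
Proof. by move=> ee hH; rewrite /hermitian adj_scale ee hH. Qed.

Lemma hermitian_local m n (A : 'M[C]_m) (B : 'M[C]_n) :
  hermitian A -> hermitian B -> hermitian (A *t 1%:M + 1%:M *t B).
Proof. by move=> hA hB; rewrite /hermitian adj_add !adj_tens !adj_scalar conjC1 hA hB. Qed.

Lemma not_scalar_conj n (P H : 'M[C]_n) :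
  unitary P -> ~ prop_to_id H -> ~ prop_to_id (P *m H *m adj P).
Proof.
move=> uP nH [c PHP]; apply: nH; exists c.
by rewrite -(unitary_conjK H uP) PHP mul_mx_scalar -scalemxAl; case: uP => _ ->; rewrite scalemx1.
Qed.

Lemma tens_scalar1 m n : (1%:M : 'M[C]_m) *t (1%:M : 'M[C]_n) = 1%:M.
Proof.
apply/matrixP => i j; case: (mxtens_indexP i) => i1 i2; case: (mxtens_indexP j) => j1 j2.
by rewrite tensmxE !mxE (inj_eq (can_inj (@mxtens_indexK _ _))) xpair_eqE -natrM mulnb.
Qed.

Lemma tens_conj_local m n (P X : 'M[C]_m) (Q Y : 'M[C]_n) : unitary P -> unitary Q ->
  (P *t Q) *m (X *t 1%:M + 1%:M *t Y) *m adj (P *t Q) =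
  (P *m X *m adj P) *t 1%:M + 1%:M *t (Q *m Y *m adj Q).
Proof.
case=> PP' _ [QQ' _].
by rewrite adj_tens mulmxDr mulmxDl !tensmx_mul !mulmx1 PP' QQ'.
Qed.

Lemma gen_thermal_local (a b c d : 'M[C]_2) (V : 'M[C]_(2 * 2)) :
  unitary a -> unitary b -> unitary c -> unitary d -> gen_thermal V ->
  gen_thermal ((a *t b) *m V *m (adj c *t adj d)).
Proof.
move=> ua ub uc ud [HA [HA' [HB [HB' [[hA hA'] [hB hB'] nscalar VHV]]]]].
exists (c *m HA *m adj c), (a *m HA' *m adj a), (d *m HB *m adj d), (b *m HB' *m adj b).
split; [split; exact: hermitian_conj.. | |].
  by case: nscalar => ?; [left | right]; apply: not_scalar_conj.
have DXD : (adj c *t adj d) *m ((c *m HA *m adj c) *t 1%:M + 1%:M *t (d *m HB *m adj d))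
           *m adj (adj c *t adj d) = HA *t 1%:M + 1%:M *t HB.
  by rewrite tens_conj_local; [rewrite !adjK !unitary_conjK | exact: unitary_adj..].
rewrite !adj_mul; set L := a *t b; set D := adj c *t adj d; set X := _ + _.
have -> : L *m V *m D *m X *m (adj D *m (adj V *m adj L)) =
          L *m (V *m (D *m X *m adj D) *m adj V) *m adj L by rewrite !mulmxA.
by rewrite DXD VHV tens_conj_local.
Qed.

Lemma gen_thermal_localE (a b c d : 'M[C]_2) (V : 'M[C]_(2 * 2)) :
  unitary a -> unitary b -> unitary c -> unitary d ->
  gen_thermal ((a *t b) *m V *m (adj c *t adj d)) <-> gen_thermal V.
Proof.
move=> ua ub uc ud; split; last exact: gen_thermal_local.
move/(gen_thermal_local (unitary_adj ua) (unitary_adj ub) (unitary_adj uc) (unitary_adj ud)).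
case: ua ub uc ud => _ a'a [_ b'b] [_ c'c] [_ d'd].
rewrite !adjK !mulmxA tensmx_mul a'a b'b tens_scalar1 mul1mx.
by rewrite -mulmxA tensmx_mul c'c d'd tens_scalar1 mulmx1.
Qed.

(* The operator with eigenvalues p, q, r, s on the Bell states
   Φ± = (|00> ± |11>)/√2 and Ψ± = (|01> ± |10>)/√2. *)
Definition bell_diag (p q r s : C) : 'M[C]_(2 * 2) :=
  \matrix_(i, j) match i : nat, j : nat with
    | 0, 0 | 3, 3 => (p + q) / 2
    | 0, 3 | 3, 0 => (p - q) / 2
    | 1, 1 | 2, 2 => (r + s) / 2
    | 1, 2 | 2, 1 => (r - s) / 2
    | _, _ => 0
    end.

Lemma bell_diagM a b c d p q r s :
  bell_diag a b c d *m bell_diag p q r s = bell_diag (a * p) (b * q) (c * r) (d * s).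
Proof.
apply/matrixP => i j; rewrite !mxE sum_ord4 !mxE.
by case_ord4 i; case_ord4 j; rewrite /=; field.
Qed.

Lemma bell_diag1 : bell_diag 1 1 1 1 = 1%:M.
Proof.
apply/matrixP => i j; rewrite !mxE.
by case_ord4 i; case_ord4 j; rewrite /= ?subrr ?mul0r // divff // two_neq0.
Qed.

Lemma mxpow_bell_diag p q r s k :
  mxpow (bell_diag p q r s) k = bell_diag (p ^+ k) (q ^+ k) (r ^+ k) (s ^+ k).
Proof.
elim: k => [|k IH]; first by rewrite !expr0 bell_diag1.
by rewrite /mxpow iterS -/(mxpow _ k) IH bell_diagM !exprS.
Qed.

Lemma adj_bell_diag p q r s : adj (bell_diag p q r s) = bell_diag p^* q^* r^* s^*.
Proof.
apply/matrixP => i j; rewrite !mxE.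
case_ord4 i; case_ord4 j; cbn [nat_of_ord]; rewrite ?rmorph0 //.
all: by rewrite rmorphM fmorphV rmorph_nat ?rmorphB ?rmorphD.
Qed.

Lemma half_sum (x y : C) : (x + y) / 2 = (2^-1)%:C * x + (2^-1)%:C * y.
Proof. by rewrite fmorphV rmorph_nat mulrDl !(mulrC _ 2^-1). Qed.

Lemma half_diff (x y : C) : (x - y) / 2 = (2^-1)%:C * x + (- 2^-1)%:C * y.
Proof. by rewrite half_sum mulrN -mulNr -rmorphN. Qed.

Lemma zero_comb (x y : C) : 0 = 0%:C * x + 0%:C * y.
Proof. by rewrite !mul0r addr0. Qed.

Lemma expm_bell_diag a b c d :
  expm (bell_diag (iC R * a%:C) (iC R * b%:C) (iC R * c%:C) (iC R * d%:C)) =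
  bell_diag (expi a) (expi b) (expi c) (expi d).
Proof.
apply/matrixP => i j; rewrite [RHS]mxE.
case_ord4 i; case_ord4 j; cbn [nat_of_ord].
(* Put every entry in the shape c1 * expi a + c2 * expi b required by expm_entry. *)
all: first [rewrite (half_diff (expi _)) | rewrite (half_sum (expi _)) |
            rewrite (zero_comb (expi 0) (expi 0))].
all: eapply expm_entry => k; rewrite mxpow_bell_diag mxE; cbn [nat_of_ord].
all: first [exact: half_diff | exact: half_sum | exact: zero_comb].
Qed.

(* The eigenvalues of sum_k t_k σ_k ⊗ σ_k on Φ+, Φ-, Ψ+, Ψ-, where σ_(k+1) is pauli k. *)
Definition phi_plus (t : 'I_3 -> R) := t o0 - t o1 + t o2.
Definition phi_minus (t : 'I_3 -> R) := - t o0 + t o1 + t o2.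
Definition psi_plus (t : 'I_3 -> R) := t o0 + t o1 - t o2.
Definition psi_minus (t : 'I_3 -> R) := - t o0 - t o1 - t o2.

Lemma sum_pauli_bell (t : 'I_3 -> R) :
  iC R *: \sum_(k < 3) ((t k)%:C *: (pauli R k *t pauli R k)) =
  bell_diag (iC R * (phi_plus t)%:C) (iC R * (phi_minus t)%:C)
            (iC R * (psi_plus t)%:C) (iC R * (psi_minus t)%:C).
Proof.
rewrite sum_ord3; apply/matrixP => i j; rewrite !mxE.
rewrite /phi_plus /phi_minus /psi_plus /psi_minus !(rmorphB, rmorphD, rmorphN).
by case_ord4 i; case_ord4 j; rewrite /= ?mulrNN ?mulNr ?mulrN ?iC_mul_iC; field.
Qed.

Lemma canonical_unitaryE (uA uB vA vB : 'M[C]_2) (t : 'I_3 -> R) :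
  canonical_unitary uA uB vA vB t =
  (uA *t uB) *m bell_diag (expi (phi_plus t)) (expi (phi_minus t))
                          (expi (psi_plus t)) (expi (psi_minus t)) *m (adj vA *t adj vB).
Proof. by rewrite /canonical_unitary sum_pauli_bell expm_bell_diag. Qed.

(* A = \tr A / 2 + sum_k pauli_coord A k *: pauli k. *)
Definition pauli_coord (A : 'M[C]_2) (k : 'I_3) : C := \tr (pauli R k *m A) / 2.

Lemma pauli_coordE (A : 'M[C]_2) :
  [/\ pauli_coord A o0 = (A ord0 ord_max + A ord_max ord0) / 2,
      pauli_coord A o1 = iC R * (A ord0 ord_max - A ord_max ord0) / 2 &
      pauli_coord A o2 = (A ord0 ord0 - A ord_max ord_max) / 2].
Proof.
rewrite /pauli_coord /mxtrace !sum_ord2 !mxE !sum_ord2 !mxE /=.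
by split; congr (_ / 2); ring.
Qed.

Lemma pauli_coordZ (e : C) (A : 'M[C]_2) k : pauli_coord (e *: A) k = e * pauli_coord A k.
Proof. by rewrite /pauli_coord -scalemxAr linearZ /= mulrA. Qed.

Lemma pauli_coord_pauli k l : pauli_coord (pauli R k) l = (l == k)%:R.
Proof.
case: (pauli_coordE (pauli R k)) => E0 E1 E2.
case: (ord3P l) => ->; rewrite ?E0 ?E1 ?E2 !mxE; case: (ord3P k) => -> /=.
all: by rewrite ?mulrBr ?mulrN -?expr2 ?iC_sqr; field.
Qed.

Lemma pauli_coord_scalar (c : C) k : pauli_coord c%:M k = 0.
Proof.
case: (pauli_coordE c%:M) => E0 E1 E2.
by case: (ord3P k) => ->; rewrite ?E0 ?E1 ?E2 !mxE /= ?subrr ?addr0 ?mulr0 ?mul0r.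
Qed.

Lemma hermitian_pauli k : hermitian (pauli R k).
Proof.
apply/matrixP => i j; rewrite adjE !mxE.
case: (ord3P k) => ->; case: (ord2P i) => ->; case: (ord2P j) => ->.
all: by rewrite /= ?conjC0 ?conjC1 ?conjCN1 ?conj_NiC ?conj_iC.
Qed.

Lemma pauli_not_scalar k : ~ prop_to_id (pauli R k).
Proof.
move=> [c Pc]; have := pauli_coord_pauli k k.
by rewrite eqxx Pc pauli_coord_scalar => /eqP; rewrite eq_sym oner_eq0.
Qed.

Lemma scalar_of_pauli_coord (A : 'M[C]_2) : (forall k, pauli_coord A k = 0) -> prop_to_id A.
Proof.
case/forall_ord3; case: (pauli_coordE A) => -> -> -> /half_eq0 sum0.
rewrite -mulrA => /eqP; rewrite mulf_eq0 (negbTE iC_neq0) /= => /eqP /half_eq0 diff0.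
move/half_eq0/subr0_eq => diag; have [a01 a10] := sum_diff_eq0 sum0 diff0.
exists (A ord0 ord0); apply/matrixP => i j; rewrite !mxE.
by case: (ord2P i) => ->; case: (ord2P j) => ->; rewrite /= ?mulr1n ?mulr0n.
Qed.

Definition local_pattern (X : 'M[C]_(2 * 2)) : Prop :=
  [/\ X i0 i3 = 0, X i1 i2 = 0, X i2 i1 = 0 & X i3 i0 = 0] /\
  [/\ X i0 i1 = X i2 i3, X i0 i2 = X i1 i3, X i1 i0 = X i3 i2, X i2 i0 = X i3 i1 &
      X i0 i0 - X i1 i1 = X i2 i2 - X i3 i3].

Definition local_mx (A B : 'M[C]_2) : 'M[C]_(2 * 2) :=
  \matrix_(i, j) match i : nat, j : nat with
  | 0, 0 => A ord0 ord0 + B ord0 ord0 | 0, 1 => B ord0 ord_max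
  | 0, 2 => A ord0 ord_max | 1, 0 => B ord_max ord0
  | 1, 1 => A ord0 ord0 + B ord_max ord_max | 1, 3 => A ord0 ord_max
  | 2, 0 => A ord_max ord0 | 2, 2 => A ord_max ord_max + B ord0 ord0
  | 2, 3 => B ord0 ord_max | 3, 1 => A ord_max ord0
  | 3, 2 => B ord_max ord0 | 3, 3 => A ord_max ord_max + B ord_max ord_max
  | _, _ => 0
  end.

Lemma local_mxE (A B : 'M[C]_2) : A *t 1%:M + 1%:M *t B = local_mx A B.
Proof.
apply/matrixP => i j; case: (mxtens_indexP i) => a b; case: (mxtens_indexP j) => c d.
rewrite !mxE !mxtens_indexK /=; case: tens_indexE => e0 e1 e2 e3.
case: (ord2P a) => ->; case: (ord2P b) => ->; case: (ord2P c) => ->; case: (ord2P d) => ->.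
all: rewrite ?e0 ?e1 ?e2 ?e3 /= ?mulr1 ?mulr0 ?mul1r ?mul0r ?addr0 ?add0r //.
Qed.

Lemma local_pattern_tens (A B : 'M[C]_2) : local_pattern (A *t 1%:M + 1%:M *t B).
Proof. by rewrite local_mxE /local_pattern !mxE /=; split; split => //; ring. Qed.

Lemma local_of_pattern (X : 'M[C]_(2 * 2)) : hermitian X -> local_pattern X ->
  exists A B : 'M[C]_2, [/\ hermitian A, hermitian B & X = A *t 1%:M + 1%:M *t B].
Proof.
move=> hX [[x03 x12 x21 x30] [x01 x02 x10 x20 xd]].
exists (\matrix_(i, j) X (mxtens_index (i, ord0)) (mxtens_index (j, ord0))).
exists (\matrix_(i, j)
  (X (mxtens_index (ord0, i)) (mxtens_index (ord0, j)) - (i == j)%:R * X i0 i0)).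
split.
- by apply/matrixP => i j; rewrite adjE !mxE hermitian_entry.
- apply/matrixP => i j.
  by rewrite adjE !mxE rmorphB rmorphM /= !hermitian_entry // conjC_nat eq_sym.
apply/matrixP => i j; case: (mxtens_indexP i) => a b; case: (mxtens_indexP j) => c d.
rewrite !mxE !mxtens_indexK /=; case: tens_indexE => e0 e1 e2 e3.
case: (ord2P a) => ->; case: (ord2P b) => ->; case: (ord2P c) => ->; case: (ord2P d) => ->.
all: rewrite ?e0 ?e1 ?e2 ?e3 /= ?mulr1 ?mulr0 ?mul1r ?mul0r ?subrr ?subr0 ?addr0 ?add0r //.
  by rewrite addrC subrK.
by rewrite -opprB xd opprB addrC subrK.
Qed.

(* The components of A ⊗ 1 + 1 ⊗ B along σ_k ⊗ 1 + 1 ⊗ σ_k and along σ_k ⊗ 1 - 1 ⊗ σ_k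
   each couple a pair of Bell states; these are the ratio gaps of their eigenvalues. *)
Definition bell_gaps (p q r s : C) (k : 'I_3) : C * C :=
  match val k with
  | 0 => (ratio_gap p r, ratio_gap q s)
  | 1 => (ratio_gap q r, ratio_gap p s)
  | _ => (ratio_gap p q, ratio_gap r s)
  end.

Definition bell_gaps_annihilate (p q r s : C) (A B : 'M[C]_2) : Prop :=
  forall k, (pauli_coord A k + pauli_coord B k) * (bell_gaps p q r s k).1 = 0 /\
            (pauli_coord A k - pauli_coord B k) * (bell_gaps p q r s k).2 = 0.

Ltac bell_conj_field :=
  rewrite !mxE !sum_ord4 !mxE !sum_ord4 !mxE /= /ratio_gap; field;
  do ?[apply/andP; split]; by [exact: two_neq0 | exact: iC_neq0 | assumption].

Lemma local_pattern_bell_conj p q r s (A B : 'M[C]_2) :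
  p != 0 -> q != 0 -> r != 0 -> s != 0 ->
  local_pattern (bell_diag p q r s *m (A *t 1%:M + 1%:M *t B) *m bell_diag p^-1 q^-1 r^-1 s^-1)
  <-> bell_gaps_annihilate p q r s A B.
Proof.
move=> p0 q0 r0 s0; rewrite /local_pattern /bell_gaps_annihilate forall_ord3 /=.
rewrite local_mxE; set X := _ *m _ *m _.
set P0p := (_ o0 + _ o0) * _; set P0m := (_ o0 - _ o0) * _.
set P1p := (_ o1 + _ o1) * _; set P1m := (_ o1 - _ o1) * _.
set P2p := (_ o2 + _ o2) * _; set P2m := (_ o2 - _ o2) * _.
have [E0 E1 E2] := pauli_coordE A; have [F0 F1 F2] := pauli_coordE B.
have [e03 e12 e21 e30] : [/\ X i0 i3 = - P2p / 2, X i1 i2 = - P2m / 2,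
                             X i2 i1 = P2m / 2 & X i3 i0 = P2p / 2].
  by rewrite /X /P2p /P2m E2 F2; split; bell_conj_field.
have [e01 e02 e10 e20] :
  [/\ X i0 i1 - X i2 i3 = (P0p - P0m) / 2 + (P1p - P1m) / (2 * iC R),
      X i0 i2 - X i1 i3 = (P0p + P0m) / 2 + (P1p + P1m) / (2 * iC R),
      X i1 i0 - X i3 i2 = - (P0p - P0m) / 2 + (P1p - P1m) / (2 * iC R) &
      X i2 i0 - X i3 i1 = - (P0p + P0m) / 2 + (P1p + P1m) / (2 * iC R)].
  by rewrite /X /P0p /P0m /P1p /P1m E0 E1 F0 F1; split; bell_conj_field.
have ed : X i0 i0 - X i1 i1 = X i2 i2 - X i3 i3 by rewrite /X; bell_conj_field.
split=> [[[x03 x12 _ _] [x01 x02 x10 x20 _]] | [[h0p h0m] [h1p h1m] [h2p h2m]]].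
  have -> : P2p = - X i0 i3 * 2 by rewrite e03; field.
  have -> : P2m = - X i1 i2 * 2 by rewrite e12; field.
  set D01 := X i0 i1 - X i2 i3; set D02 := X i0 i2 - X i1 i3.
  set D10 := X i1 i0 - X i3 i2; set D20 := X i2 i0 - X i3 i1.
  have [-> -> -> ->] : [/\ P0p = (D01 + D02 - D10 - D20) / 2, P0m = (- D01 + D02 + D10 - D20) / 2,
                           P1p = iC R * (D01 + D02 + D10 + D20) / 2 &
                           P1m = iC R * (- D01 + D02 - D10 + D20) / 2].
    by rewrite /D01 /D02 /D10 /D20 e01 e02 e10 e20; split; field; exact: iC_neq0.
  by rewrite /D01 /D02 /D10 /D20 x01 x02 x10 x20 x03 x12 !subrr; split; split; ring.
rewrite h0p h0m h1p h1m h2p h2m !(subrr, addr0, oppr0, mul0r) in e03 e12 e21 e30 e01 e02 e10 e20.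
by split; split => //; apply/subr0_eq.
Qed.

Lemma gen_thermal_bell_diag_local p q r s :
  p * p^* = 1 -> q * q^* = 1 -> r * r^* = 1 -> s * s^* = 1 ->
  gen_thermal (bell_diag p q r s) <->
  exists A B : 'M[C]_2, [/\ hermitian A, hermitian B,
    ~ prop_to_id A \/ ~ prop_to_id B & bell_gaps_annihilate p q r s A B].
Proof.
move=> up uq ur us.
have adjV : adj (bell_diag p q r s) = bell_diag p^-1 q^-1 r^-1 s^-1.
  by rewrite adj_bell_diag !unimodular_inv.
have conjE A B := local_pattern_bell_conj A B
  (unimodular_neq0 up) (unimodular_neq0 uq) (unimodular_neq0 ur) (unimodular_neq0 us).
split=> [[A [A' [B [B' [[hA _] [hB _] nscalar VYV]]]]] | [A [B [hA hB nscalar ann]]]].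
  by exists A, B; split => //; apply/conjE; rewrite -adjV VYV; exact: local_pattern_tens.
have [|A' [B' [hA' hB' VYV]]] :=
  local_of_pattern (hermitian_conj (bell_diag p q r s) (hermitian_local hA hB)).
  by rewrite adjV; apply/conjE.
by exists A, A', B, B'.
Qed.

Lemma annihilate_scalar p q r s (A B : 'M[C]_2) :
  bell_gaps_annihilate p q r s A B ->
  (forall k, (bell_gaps p q r s k).1 != 0 /\ (bell_gaps p q r s k).2 != 0) ->
  prop_to_id A /\ prop_to_id B.
Proof.
move=> ann gaps_nz.
have coord0 k : pauli_coord A k = 0 /\ pauli_coord B k = 0.
  have [g1 g2] := gaps_nz k; have [e1 e2] := ann k.
  by apply: sum_diff_eq0; [apply: (mulIf g1) | apply: (mulIf g2)]; rewrite mul0r.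
by split; apply: scalar_of_pauli_coord => k; have [] := coord0 k.
Qed.

Lemma annihilate_pauli p q r s k (e : C) :
  e = 1 /\ (bell_gaps p q r s k).1 = 0 \/ e = -1 /\ (bell_gaps p q r s k).2 = 0 ->
  bell_gaps_annihilate p q r s (pauli R k) (e *: pauli R k).
Proof.
move=> gap0 l; rewrite pauli_coordZ !pauli_coord_pauli.
case: eqP => [-> | _]; last by rewrite mulr0 subrr addr0 !mul0r.
by case: gap0 => -[-> ->]; rewrite !mulr0 ?mulr1 ?mulN1r ?subrr ?opprK ?mul0r.
Qed.

Lemma gen_thermal_bell_diagE p q r s :
  p * p^* = 1 -> q * q^* = 1 -> r * r^* = 1 -> s * s^* = 1 ->
  gen_thermal (bell_diag p q r s) <->
  exists k, (bell_gaps p q r s k).1 = 0 \/ (bell_gaps p q r s k).2 = 0.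
Proof.
move=> up uq ur us; rewrite gen_thermal_bell_diag_local //.
split=> [[A [B [_ _ nscalar ann]]] | [k gap0]].
  apply: contrapT => no_gap.
  suff [] : prop_to_id A /\ prop_to_id B by case: nscalar.
  apply: annihilate_scalar ann _ => k.
  by split; apply/eqP => gap0; apply: no_gap; exists k; [left | right].
case: gap0 => gap0; exists (pauli R k); [exists (1 *: pauli R k) | exists ((-1) *: pauli R k)].
all: split; [exact: hermitian_pauli | apply: hermitianZ (hermitian_pauli k) |
             left; exact: pauli_not_scalar | apply: annihilate_pauli; by [left | right]].
all: by rewrite ?rmorph1 ?rmorphN1.
Qed.

Local Notation bell_gaps_of t :=
  (bell_gaps (expi (phi_plus t)) (expi (phi_minus t)) (expi (psi_plus t)) (expi (psi_minus t))).

Lemma bell_gaps_expi (t : 'I_3 -> R) :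
  (exists k, (bell_gaps_of t k).1 = 0 \/ (bell_gaps_of t k).2 = 0) <->
  (zero_mod_half_pi (t o2 - t o1) \/ zero_mod_half_pi (t o2 + t o1)) \/
  (zero_mod_half_pi (t o2 - t o0) \/ zero_mod_half_pi (t o2 + t o0)) \/
  (zero_mod_half_pi (t o0 - t o1) \/ zero_mod_half_pi (t o0 + t o1)).
Proof.
rewrite exists_ord3 /= /phi_plus /phi_minus /psi_plus /psi_minus.
rewrite (ratio_gap_expi_half_pi (u := t o2 - t o1)); last by ring.
rewrite (ratio_gap_expi_half_pi (u := t o2 + t o1)); last by ring.
rewrite (ratio_gap_expi_half_pi (u := t o2 - t o0)); last by ring.
rewrite (ratio_gap_expi_half_pi (u := t o2 + t o0)); last by ring.
rewrite (ratio_gap_expi_half_pi (u := t o0 - t o1)); last by ring.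
by rewrite (ratio_gap_expi_half_pi (u := t o0 + t o1)); last by ring.
Qed.

Lemma exists_distinct_pair (P : R -> Prop) (t : 'I_3 -> R) :
  (forall x, P (- x) <-> P x) ->
  (exists j k : 'I_3, j != k /\ (P (t j - t k) \/ P (t j + t k))) <->
  (P (t o2 - t o1) \/ P (t o2 + t o1)) \/ (P (t o2 - t o0) \/ P (t o2 + t o0)) \/
  (P (t o0 - t o1) \/ P (t o0 + t o1)).
Proof.
move=> PN; have swap j k : P (t j - t k) \/ P (t j + t k) -> P (t k - t j) \/ P (t k + t j).
  by rewrite -(opprB (t j)) PN (addrC (t k)).
split=> [[j [k [jk Pjk]]] | [P21 | [P20 | P01]]]; last 3 first.
- by exists o2, o1; split.
- by exists o2, o0; split.
- by exists o0, o1; split.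
case: (ord3P j) jk Pjk => ->; case: (ord3P k) => ->; rewrite ?eqxx // => _ Pjk.
- by right; right.
- by right; left; apply: swap.
- by right; right; apply: swap.
- by left; apply: swap.
- by right; left.
- by left.
Qed.

End TwoQubits.

Close Scope complex_scope.
Close Scope classical_set_scope.

Theorem theorem5 (R : realType) (uA uB vA vB : 'M[R[i]]_2) (t : 'I_3 -> R) :
  unitary uA -> unitary uB -> unitary vA -> unitary vB ->
  gen_thermal (canonical_unitary uA uB vA vB t) <->
  exists j k : 'I_3, j != k /\
    (zero_mod_half_pi (t j - t k) \/ zero_mod_half_pi (t j + t k)).
Proof.
move=> unit_uA unit_uB unit_vA unit_vB.
rewrite canonical_unitaryE gen_thermal_localE // gen_thermal_bell_diagE ?expi_unit //.
by rewrite bell_gaps_expi exists_distinct_pair //; exact: zero_mod_half_piN.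
Qed.
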